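(* Let $r\ge4$. Let $\alpha>0$ be sufficiently small in terms of $r$, and let $\delta>0$ be sufficiently small in terms of $\alpha$. Let $\mathcal C$ be a nonempty collection of balanced cuts and $H$ a graph on $V=[n]$. If $H$ is rigid (with respect to $\mathcal C$), then there are distinct $(\mathcal C,H)$-components $S_1,\dots,S_{r-1}$ each of size greater than $n/r$.
   Context: A cut is an ordered partition $\Pi=(A_1,\dots,A_{r-1})$ of $V$. It is balanced if each block has size strictly between $(1-\delta)n/(r-1)$ and $(1+\delta)n/(r-1)$. $\mathrm{ext}(\Pi)$ is the set of pairs meeting two distinct blocks, and $|\Pi_H|=|H\cap\mathrm{ext}(\Pi)|$. $b(\mathcal C,H)=\max\{|\Pi_H|:\Pi\in\mathcal C\}$ and $\max(\mathcal C,H)=\{\Pi\in\mathcal C:|\Pi_H|=b(\mathcal C,H)\}$. Write $x\equiv y$ if $x$ and $y$ lie in the same block of $\Pi$ for every $\Pi\in\max(\mathcal C,H)$. The equivalence classes of $\equiv$ are the $(\mathcal C,H)$-components. $H$ is rigid if the number of unordered pairs $\{x,y\}$ ($x\ne y$) with $x\equiv y$ is at least $(1-\alpha)n^2/(2(r-1))$. *)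

From HB Require Import structures.
From mathcomp Require Import all_boot all_order all_algebra.
Set Implicit Arguments. Unset Strict Implicit. Unset Printing Implicit Defensive.
Import Order.TTheory GRing.Theory Num.Theory.

(* Vertex set V = [n] is 'I_n.  A cut (ordered partition into k = r-1 blocks)
   is a map assigning to each vertex the index of its block. *)
Definition cut (n k : nat) := {ffun 'I_n -> 'I_k}.

Definition simple_graph (n : nat) (H : rel 'I_n) :=
  symmetric H /\ irreflexive H.

Definition balanced (n k : nat) (d : rat) (P : cut n k) : Prop :=
  forall i : 'I_k,
    ((1 - d) * n%:R / k%:R < (#|[set x | P x == i]|)%:R :> rat)%R /\
    ((#|[set x | P x == i]|)%:R < (1 + d) * n%:R / k%:R :> rat)%R.

Definition cutval (n k : nat) (H : rel 'I_n) (P : cut n k) : nat :=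
  #|[set p : 'I_n * 'I_n | [&& (p.1 < p.2)%N, H p.1 p.2 & P p.1 != P p.2]]|.

Definition bval (n k : nat) (C : {set cut n k}) (H : rel 'I_n) : nat :=
  \max_(P in C) cutval H P.

Definition maxcuts (n k : nat) (C : {set cut n k}) (H : rel 'I_n) : {set cut n k} :=
  [set P in C | cutval H P == bval C H].

Definition cequiv (n k : nat) (C : {set cut n k}) (H : rel 'I_n) (x y : 'I_n) : bool :=
  [forall P in maxcuts C H, P x == P y].

Definition component (n k : nat) (C : {set cut n k}) (H : rel 'I_n) (x : 'I_n)
  : {set 'I_n} := [set y | cequiv C H x y].

Definition is_component (n k : nat) (C : {set cut n k}) (H : rel 'I_n)
  (S : {set 'I_n}) : Prop := exists x, S = component C H x.

Definition rigid (n k : nat) (a : rat) (C : {set cut n k}) (H : rel 'I_n) : Prop :=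
  ((1 - a) * (n%:R ^+ 2) / (2 * k%:R) <=
   (#|[set p : 'I_n * 'I_n | (p.1 < p.2)%N && cequiv C H p.1 p.2]|)%:R :> rat)%R.

(* Fix a maximal cut P in max(C,H).  Every (C,H)-component lies inside a block
   of P, so it has fewer than (1+d)n/(r-1) vertices, while rigidity gives
   sum_x |comp x| >= 2 #{x == y} >= (1-a)n^2/(r-1).  If every vertex of some
   block B_i had a component of size at most n/r, this sum would be at most
   |B_i| n/r + (n - |B_i|)(1+d)n/(r-1), which is too small because
   |B_i| > (1-d)n/(r-1) and 1/r falls short of 1/(r-1) by 1/(r(r-1)) >> a, d.
   Hence each block contains a vertex with a large component, and these
   components are distinct because they lie in distinct blocks. *)

From HB Require Import structures.
From mathcomp Require Import all_boot all_order all_algebra.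
From mathcomp Require Import ring lra.
Import Order.TTheory GRing.Theory Num.Theory.

Set Implicit Arguments.
Unset Strict Implicit.
Unset Printing Implicit Defensive.

Lemma card_rel_pairs (T : finType) (E : rel T) :
  #|[set p : T * T | E p.1 p.2]| = \sum_x #|[set y | E x y]|.
Proof.
rewrite -sum1_card big_mkcond.
under [RHS]eq_bigr do rewrite -sum1_card big_mkcond.
by rewrite pair_big /=; apply: eq_bigr => -[x y] _; rewrite !inE.
Qed.

Lemma card_ltn_sym_pairs n (E : rel 'I_n) : symmetric E ->
  (2 * #|[set p : 'I_n * 'I_n | (p.1 < p.2)%N && E p.1 p.2]|
     <= #|[set p : 'I_n * 'I_n | E p.1 p.2]|)%N.
Proof.
move=> Esym; set A := [set p : 'I_n * 'I_n | _ && _].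
have swap_inj : injective (fun p : 'I_n * 'I_n => (p.2, p.1)) by move=> [? ?] [? ?] [-> ->].
set B := [set (p.2, p.1) | p in A].
have disjAB : [disjoint A & B].
  apply/pred0P => -[x y] /=; apply/negP => /andP[]; rewrite inE /= => /andP[xy _].
  case/imsetP=> -[u v]; rewrite inE /= => /andP[uv _] [ex ey]; subst x y.
  by rewrite ltnNge ltnW in xy.
have subAB : A :|: B \subset [set p : 'I_n * 'I_n | E p.1 p.2].
  apply/subsetP => -[x y]; rewrite !inE /= => /orP[/andP[_ //]|].
  by case/imsetP=> -[u v]; rewrite inE /= => /andP[_ uv] [-> ->]; rewrite Esym.
have cardAB : #|A :|: B| = (#|A| + #|B|)%N.
  by rewrite cardsU (disjoint_setI0 disjAB) cards0 subn0.
by rewrite mul2n -addnn -{2}(card_imset A swap_inj) -cardAB subset_leq_card.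
Qed.

Section MaximalCuts.

Variables (n k : nat) (C : {set cut n k}) (H : rel 'I_n).

Lemma cequiv_refl : reflexive (cequiv C H).
Proof. by move=> x; apply/forallP => P; apply/implyP. Qed.

Lemma cequiv_sym : symmetric (cequiv C H).
Proof.
suff imp x y : cequiv C H x y -> cequiv C H y x by move=> x y; apply/idP/idP; apply: imp.
by move=> /forallP xy; apply/forallP => P; rewrite eq_sym; apply: xy.
Qed.

Lemma maxcuts_subset : {subset maxcuts C H <= C}.
Proof. by move=> P; rewrite inE => /andP[]. Qed.

Lemma maxcuts_neq0 : C != set0 -> maxcuts C H != set0.
Proof.
rewrite -!card_gt0 => C_gt0; have [P PC Pmax] := eq_bigmax_cond (cutval H) C_gt0.
by apply/card_gt0P; exists P; rewrite inE PC /bval Pmax eqxx.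
Qed.

Lemma maxcuts_cequiv P x y : P \in maxcuts C H -> cequiv C H x y -> P x = P y.
Proof. by move=> PM /forallP/(_ P); rewrite PM => /eqP. Qed.

Lemma component_sub_block P x :
  P \in maxcuts C H -> component C H x \subset [set y | P y == P x].
Proof.
by move=> PM; apply/subsetP => y; rewrite !inE => /(maxcuts_cequiv PM) ->.
Qed.

Lemma cequiv_pairs_le_sum_component :
  (2 * #|[set p : 'I_n * 'I_n | (p.1 < p.2)%N && cequiv C H p.1 p.2]|
     <= \sum_x #|component C H x|)%N.
Proof. by rewrite -card_rel_pairs; apply: card_ltn_sym_pairs; apply: cequiv_sym. Qed.

Local Open Scope ring_scope.

Lemma sum_card_component_le d P (i : 'I_k) (B : rat) :
  P \in maxcuts C H -> balanced d P ->
  (forall x, P x = i -> #|component C H x|%:R <= B) ->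
  \sum_x (#|component C H x|%:R : rat) <=
    #|[set x | P x == i]|%:R * B + (n - #|[set x | P x == i]|)%:R * ((1 + d) * n%:R / k%:R).
Proof.
move=> PM Pbal small; rewrite (bigID (fun x => P x == i)) /=.
have -> : (n - #|[set x | P x == i]|)%N = #|[set x | P x != i]|.
  by rewrite [RHS]cardsCs card_ord; congr (_ - _)%N; apply: eq_card => x; rewrite !inE negbK.
rewrite !mulr_natl -!sumr_const !big_set /=.
apply: lerD; apply: ler_sum => x.
  by move=> /eqP; apply: small.
move=> _; apply: le_trans (ltW (Pbal (P x)).2).
by rewrite ler_nat subset_leq_card // component_sub_block.
Qed.

Lemma rigid_le_sum_card_component a : (0 < k)%N -> rigid a C H ->
  (1 - a) * n%:R ^+ 2 / k%:R <= \sum_x (#|component C H x|%:R : rat).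
Proof.
move=> k_gt0 Hrigid; rewrite -natr_sum.
apply: le_trans (_ : _ <= (2 * _)%:R) (_ : _ <= _ :> rat); last first.
  by rewrite ler_nat; apply: cequiv_pairs_le_sum_component.
rewrite natrM.
have -> : (1 - a) * n%:R ^+ 2 / k%:R = 2 * ((1 - a) * n%:R ^+ 2 / (2 * k%:R)).
  by field; rewrite pnatr_eq0 -lt0n.
by rewrite ler_pM2l.
Qed.

End MaximalCuts.

Local Open Scope ring_scope.

Lemma balanced_gt0 n k d (P : cut n k) : (0 < k)%N -> balanced d P -> (0 < n)%N.
Proof.
move=> k_gt0 Pbal; rewrite lt0n; apply/eqP => n0.
have block0 : #|[set x | P x == Ordinal k_gt0]| = 0%N.
  by apply/eqP; rewrite -leqn0 -[X in (_ <= X)%N]n0 -[X in (_ <= X)%N]card_ord max_card.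
have := (Pbal (Ordinal k_gt0)).1.
by rewrite block0 (_ : n%:R = 0) ?n0 // mulr0 mul0r ltxx.
Qed.

Lemma invrSn_sub_invr (R : numFieldType) k : (0 < k)%N ->
  k.+1%:R^-1 - k%:R^-1 = - (k%:R^-1 * k.+1%:R^-1) :> R.
Proof.
move=> k_gt0; have k_neq0 : k%:R != 0 :> R by rewrite pnatr_eq0 -lt0n.
have k1_neq0 : k%:R + 1 != 0 :> R by rewrite natr1 pnatr_eq0.
by rewrite -natr1; field; apply/andP.
Qed.

Lemma deficient_block_arith (c e N b a d : rat) :
  0 < c -> 0 < e -> e - c = - (c * e) -> c * e <= 1 -> 0 < N ->
  0 < a -> a < c * e / 2 -> 0 < d -> d < c * e / 4 ->
  (1 - d) * N * c < b ->
  b * (N * e) + (N - b) * ((1 + d) * N * c) < (1 - a) * N ^+ 2 * c.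
Proof.
move=> c0 e0 ec ce1 N0 a0 ha d0 hd hb.
have slope : e - (1 + d) * c = - (c * e + d * c) by rewrite mulrDl mul1r; lra.
have slope_lt0 : e - (1 + d) * c < 0 by rewrite slope oppr_lt0; nra.
have hbs : b * (e - (1 + d) * c) < (1 - d) * N * c * (e - (1 + d) * c) by rewrite ltr_nM2r.
have margin : 0 < N * c * ((1 - d) * (c * e + d * c) - (d + a)).
  by apply: mulr_gt0; [exact: mulr_gt0 | nra].
have be : b * (e - c) = - (b * (c * e)) by rewrite ec mulrN.
have inner : b * e + (N - b) * ((1 + d) * c) < (1 - a) * N * c.
  by rewrite slope in hbs; lra.
have -> : (1 - a) * N ^+ 2 * c = (1 - a) * N * c * N by ring.
have -> : b * (N * e) + (N - b) * ((1 + d) * N * c) = (b * e + (N - b) * ((1 + d) * c)) * N.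
  by ring.
by rewrite ltr_pM2r.
Qed.

Lemma large_component_in_block n k (a d : rat) (C : {set cut n k}) (H : rel 'I_n) P
    (i : 'I_k) :
  0 < a -> a < (k%:R * k.+1%:R)^-1 / 2 -> 0 < d -> d < (k%:R * k.+1%:R)^-1 / 4 ->
  P \in maxcuts C H -> balanced d P -> rigid a C H ->
  exists2 x, P x = i & n%:R / k.+1%:R < #|component C H x|%:R :> rat.
Proof.
move=> a_gt0 a_small d_gt0 d_small PM Pbal Hrigid.
have k_gt0 : (0 < k)%N by apply: leq_ltn_trans (ltn_ord i).
set c : rat := k%:R^-1; set e : rat := k.+1%:R^-1; set N : rat := n%:R.
have c_gt0 : 0 < c by rewrite invr_gt0 ltr0n.
have e_gt0 : 0 < e by rewrite invr_gt0.
have ec : e - c = - (c * e) by apply: invrSn_sub_invr.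
have ce_le1 : c * e <= 1.
  by rewrite mulr_ile1 ?(ltW c_gt0) ?(ltW e_gt0) // /c /e invf_le1 ?ltr0n ?ler1n.
have N_gt0 : 0 < N by rewrite ltr0n (balanced_gt0 k_gt0 Pbal).
have [x /andP[/eqP Pxi large] | none] :=
  pickP [pred x | (P x == i) && (N / k.+1%:R < #|component C H x|%:R)].
  by exists x.
have small x : P x = i -> #|component C H x|%:R <= N * e.
  by move=> Pxi; have := none x; rewrite /= Pxi eqxx /= => /negbT; rewrite -leNgt.
have sum_le := sum_card_component_le PM Pbal small.
have rigid_le := rigid_le_sum_card_component k_gt0 Hrigid.
have block_le : (#|[set x | P x == i]| <= n)%N.
  by rewrite -[X in (_ <= X)%N]card_ord max_card.
exfalso; rewrite invfM -/c -/e in a_small d_small.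
have := deficient_block_arith c_gt0 e_gt0 ec ce_le1 N_gt0 a_gt0 a_small d_gt0 d_small (Pbal i).1.
by rewrite ltNge (le_trans rigid_le) // -natrB.
Qed.

Theorem mainTheorem15 :
  forall r : nat, (4 <= r)%N ->
  exists a0 : rat, (0 < a0)%R /\
  forall a : rat, (0 < a)%R -> (a < a0)%R ->
  exists d0 : rat, (0 < d0)%R /\
  forall d : rat, (0 < d)%R -> (d < d0)%R ->
  forall (n : nat) (C : {set cut n r.-1}) (H : rel 'I_n),
    C != set0 ->
    (forall P, P \in C -> balanced d P) ->
    simple_graph H ->
    rigid a C H ->
    exists S : 'I_(r.-1) -> {set 'I_n},
      injective S /\
      forall i, is_component C H (S i) /\
                (n%:R / r%:R < (#|S i|)%:R :> rat)%R.
Proof.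
case=> [//|k] k_ge3 /=.
have kk1_gt0 : 0 < (k%:R * k.+1%:R)^-1 :> rat.
  by rewrite invr_gt0 -natrM ltr0n muln_gt0 andbT; case: k k_ge3.
exists ((k%:R * k.+1%:R)^-1 / 2); split=> [|a a_gt0 a_small]; first by rewrite divr_gt0.
exists ((k%:R * k.+1%:R)^-1 / 4); split=> [|d d_gt0 d_small]; first by rewrite divr_gt0.
move=> n C H C_neq0 Cbal _ Hrigid.
have /set0Pn[P PM] := maxcuts_neq0 H C_neq0.
have Pbal := Cbal P (maxcuts_subset PM).
have [f Pf large] := @fin_all_exists2 _ (fun=> 'I_n) _ _
  (fun i => large_component_in_block i a_gt0 a_small d_gt0 d_small PM Pbal Hrigid).
exists (fun i => component C H (f i)); split=> [i j same_comp | i].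
  have : f i \in component C H (f j) by rewrite -same_comp inE cequiv_refl.
  by rewrite inE => /(maxcuts_cequiv PM); rewrite !Pf.
by split; [exists (f i) | exact: large].
Qed.
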